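(* Let $d>1$ and $\gamma>0$, and let $K(x,y)=e^{-\gamma\|x-y\|_2^2}$ be the Gaussian kernel on $\mathbb{R}^d$. There exists a finite dataset $X\subset\mathbb{R}^d$ such that for every $D\in\mathbb{N}$ and every map $\phi=(\phi_1,\dots,\phi_D):X\to\mathbb{R}^D$ satisfying $\langle\phi(x),\phi(y)\rangle=\sum_{j=1}^D\phi_j(x)\phi_j(y)=K(x,y)$ for all $x,y\in X$, there exists some $j\in[D]$ such that $\phi_j$ depends on more than one input coordinate, i.e. there is no $i\in[d]$ and no function $h:\mathbb{R}\to\mathbb{R}$ with $\phi_j(x)=h(x_i)$ for all $x\in X$.
   Context: For $x\in\mathbb{R}^d$, $x_i$ denotes its $i$-th coordinate; $[D]=\{1,\dots,D\}$. A feature map $\phi:X\to\mathbb{R}^D$ is called interpretable if each component $\phi_j$ depends on exactly one coordinate of $x$; the theorem says no feature map of the Gaussian kernel on this $X$ is interpretable. *)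

From mathcomp Require Import all_boot all_order all_algebra.
From mathcomp Require Import all_classical all_reals all_analysis.
Import Order.TTheory GRing.Theory Num.Theory.
Local Open Scope ring_scope.

Definition sqdist {R : realType} {d : nat} (x y : 'rV[R]_d) : R :=
  \sum_(i < d) (x ord0 i - y ord0 i) ^+ 2.

Definition gauss_kernel {R : realType} {d : nat} (gamma : R) (x y : 'rV[R]_d) : R :=
  expR (- gamma * sqdist x y).

Definition is_feature_map {R : realType} {d D : nat} (K : 'rV[R]_d -> 'rV[R]_d -> R)
  (X : seq 'rV[R]_d) (phi : 'rV[R]_d -> 'I_D -> R) : Prop :=
  forall x y, x \in X -> y \in X -> \sum_(j < D) phi x j * phi y j = K x y.

Definition depends_on_one_coord {R : realType} {d : nat} (X : seq 'rV[R]_d)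
  (f : 'rV[R]_d -> R) : Prop :=
  exists (i : 'I_d) (h : R -> R), forall x, x \in X -> f x = h (x ord0 i).

From mathcomp Require Import all_boot all_order all_algebra.
From mathcomp Require Import all_classical all_reals all_analysis.
From mathcomp Require Import ring.
Import Order.TTheory GRing.Theory Num.Theory.
Local Open Scope ring_scope.

(* Take X to be the four corners of a unit square in two coordinate directions.
   A function of a single coordinate has zero mixed second difference
   f(1,1) - f(1,0) - f(0,1) + f(0,0) on X. Pairing the components of a feature
   map with their values at the origin, such mixed differences add up to the
   mixed difference of K(., 0), which for the Gaussian kernel is
   e^(-2 gamma) - 2 e^(-gamma) + 1 = (e^(-gamma) - 1)^2 > 0. *)

Section UnitSquare.

Context {R : realType} {d : nat} (i0 i1 : 'I_d).

Definition corner (a b : R) : 'rV[R]_d :=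
  \row_k (if k == i0 then a else if k == i1 then b else 0).

Definition unit_square : seq 'rV[R]_d :=
  [:: corner 0 0; corner 1 0; corner 0 1; corner 1 1].

Definition mixed_diff (f : 'rV[R]_d -> R) : R :=
  f (corner 1 1) - f (corner 1 0) - f (corner 0 1) + f (corner 0 0).

Lemma mixed_diff_one_coord (f : 'rV[R]_d -> R) :
  depends_on_one_coord unit_square f -> mixed_diff f = 0.
Proof.
move=> [i [h fE]]; rewrite /mixed_diff !fE ?inE ?eqxx ?orbT // !mxE.
by case: (i == i0); case: (i == i1); ring.
Qed.

Lemma feature_map_mixed_diff {K : 'rV[R]_d -> 'rV[R]_d -> R} {D : nat}
    {phi : 'rV[R]_d -> 'I_D -> R} :
  is_feature_map K unit_square phi ->
  \sum_(j < D) mixed_diff (phi^~ j) * phi (corner 0 0) j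
    = mixed_diff (K^~ (corner 0 0)).
Proof.
move=> phiK; rewrite /mixed_diff -!phiK ?inE ?eqxx ?orbT //.
rewrite -!sumrB -big_split /=; apply: eq_bigr => j _; ring.
Qed.

Hypothesis i01 : i0 != i1.

Lemma sqdist_corner (a b : R) :
  sqdist (corner a b) (corner 0 0) = a ^+ 2 + b ^+ 2.
Proof.
rewrite /sqdist (bigD1 i0) //= (bigD1 i1) 1?eq_sym //= big1.
  by rewrite !mxE eqxx eq_sym (negPf i01) eqxx !subr0 addr0.
by move=> k /andP [k1 k0]; rewrite !mxE (negPf k1) (negPf k0) subr0 expr0n.
Qed.

Lemma mixed_diff_gauss_kernel (gamma : R) :
  mixed_diff ((gauss_kernel gamma)^~ (corner 0 0)) = (expR (- gamma) - 1) ^+ 2.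
Proof.
rewrite /mixed_diff /gauss_kernel !sqdist_corner !expr1n !expr0n /=.
rewrite !addr0 add0r mulr0 mulr1 expR0 -[1 + 1]/(2%:R) expRM_natr; ring.
Qed.

End UnitSquare.

Theorem theorem1 (R : realType) (d : nat) (gamma : R) :
  (1 < d)%N -> 0 < gamma ->
  exists X : seq 'rV[R]_d,
    forall (D : nat) (phi : 'rV[R]_d -> 'I_D -> R),
      is_feature_map (gauss_kernel gamma) X phi ->
      exists j : 'I_D, ~ depends_on_one_coord X (fun x => phi x j).
Proof.
move=> d_gt1 gamma_gt0.
pose i0 : 'I_d := Ordinal (ltnW d_gt1).
pose i1 : 'I_d := Ordinal d_gt1.
exists (unit_square i0 i1) => D phi phiK.
apply/not_existsP => one_coord.
have flat j : mixed_diff i0 i1 (phi^~ j) = 0.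
  by apply: mixed_diff_one_coord; apply: contrapT; exact: one_coord.
have := feature_map_mixed_diff i0 i1 phiK.
rewrite big1 => [|j _]; last by rewrite flat mul0r.
rewrite mixed_diff_gauss_kernel // => /esym/eqP.
rewrite sqrf_eq0 subr_eq0 => /eqP expR_eq1.
have : expR (- gamma) < 1 by rewrite expR_lt1 oppr_lt0.
by rewrite expR_eq1 ltxx.
Qed.
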